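(* Let $q\in[0,1)$ and $\Omega_n=\{\lambda \text{ partition}:\ell(\lambda)\le n\}$, with $\ell(\lambda)$ the number of nonzero parts. Define $\eta_n(\lambda)=\ell(\lambda)-n$ and $\phi_{n,x}(\lambda)=\prod_{0\le j<-x}q^{\lambda_{n-j}}$ for $x\in\mathbb R$ (empty product $=1$, $q^0=1$, and $q^{\lambda_{-m}}=0$ for $m\ge 0$). Then, for any probability measures on the $\Omega_n$, these satisfy conditions (1)–(4): (1) $0\le\phi_{n,x}\le\phi_{n,y}\le1$ for $x\le y$; (2) for every $\varepsilon>0$ there is $M$ with $\phi_{n,x}<\varepsilon$ whenever $\eta_n-x>M$, uniformly in $n,x$; (3) for every $\varepsilon>0$ there is $M$ with $\phi_{n,x}>1-\varepsilon$ whenever $\eta_n-x<-M$, uniformly in $n,x$; (4) there is $c>0$ independent of $n$ with $\phi_{n,x+1}-\phi_{n,x}\ge c$ whenever $x<\eta_n\le x+1$. Consequently $\{\ell(\lambda)-n\}_{n\ge1}$ and $\{F_n(x)=\mathbb E\prod_{0\le j<-x}q^{\lambda_{n-j}}\}_{n\ge1}$ are asymptotically equivalent as $n\to\infty$.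
   Context: A sequence $\{\eta_n\}_{n\ge1}$ of real random variables spreads if $\lim_{n\to\infty}\sup_{x\in\mathbb R}\mathrm{Prob}\{x<\eta_n\le x+1\}=0$. A sequence $\{F_n\}_{n\ge1}$ of non-decreasing functions $\mathbb R\to\mathbb R$ spreads if $\lim_{n\to\infty}\sup_{x\in\mathbb R}(F_n(x+1)-F_n(x))=0$. A sequence of real random variables $\{\eta_n\}$ and a sequence of non-decreasing functions $\{F_n\}$ are asymptotically equivalent if (i) $\{\eta_n\}$ spreads if and only if $\{F_n\}$ spreads, and (ii) when both spread, $\lim_{n\to\infty}\sup_{x\in\mathbb R}(\mathrm{Prob}\{\eta_n\le x\}-F_n(x))=0$. *)

From Stdlib Require Import Reals Lra Lia List ClassicalEpsilon.
Import ListNotations.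
Open Scope R_scope.

(** Partitions: lambda = [lambda_1; ...; lambda_l] as a list of its nonzero
    parts, weakly decreasing.  lambda_i (1-indexed) = nth (i-1) lambda 0,
    which is 0 for i > l(lambda). *)
Definition is_partition (l : list nat) : Prop :=
  (forall i, (i + 1 < length l)%nat -> (nth (i + 1) l 0 <= nth i l 0)%nat) /\
  (forall i, (i < length l)%nat -> (0 < nth i l 0)%nat).

Definition ell (l : list nat) : nat := length l.

Definition in_Omega (n : nat) (l : list nat) : Prop :=
  is_partition l /\ (ell l <= n)%nat.

Definition eta (n : nat) (l : list nat) : R := INR (ell l) - INR n.

Fixpoint prodR (K : nat) (f : nat -> R) : R :=
  match K with
  | O => 1
  | S k => prodR k f * f k
  end.

(** number of integers j with 0 <= j < -x, i.e. max(0, ceil(-x)) = max(0, 1 - up x)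
    (up x is the unique integer with x < up x <= x + 1). *)
Definition nfactors (x : R) : nat := Z.to_nat (1 - up x)%Z.

(** the factor q^{lambda_{n-j}}, with the convention q^{lambda_{-m}} = 0 for m >= 0,
    i.e. the factor is 0 when the index n - j is <= 0. *)
Definition factor (q : R) (n : nat) (l : list nat) (j : nat) : R :=
  if Nat.ltb j n then q ^ (nth (n - j - 1) l 0%nat) else 0.

Definition phi (q : R) (n : nat) (x : R) (l : list nat) : R :=
  prodR (nfactors x) (factor q n l).

Definition series_value (u : nat -> R) : R :=
  epsilon (inhabits 0) (fun s => infinite_sum u s).

Definition ind (P : Prop) : R :=
  if excluded_middle_informative P then 1 else 0.

(** A probability measure on a countable set of partitions is given by atoms
    a : nat -> list nat and weights w : nat -> R (w >= 0, sum w = 1). *)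
Definition discrete_prob_on (n : nat) (a : nat -> list nat) (w : nat -> R) : Prop :=
  (forall k, 0 <= w k) /\ infinite_sum w 1 /\ (forall k, in_Omega n (a k)).

Definition Prob (a : nat -> list nat) (w : nat -> R) (A : list nat -> Prop) : R :=
  series_value (fun k => w k * ind (A (a k))).

Definition Expect (a : nat -> list nat) (w : nat -> R) (f : list nat -> R) : R :=
  series_value (fun k => w k * f (a k)).

(** lim_{n -> oo} sup_{x in R} f n x = 0  (the sup being a real number). *)
Definition sup_tends_to_0 (f : nat -> R -> R) : Prop :=
  forall eps, 0 < eps -> exists N : nat, forall n, (N <= n)%nat ->
    (forall x, f n x <= eps) /\ (exists x, - eps <= f n x).

Definition spreads_rv (a : nat -> nat -> list nat) (w : nat -> nat -> R)
  (X : nat -> list nat -> R) : Prop :=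
  sup_tends_to_0 (fun n x => Prob (a n) (w n) (fun l => x < X n l <= x + 1)).

Definition spreads_fun (F : nat -> R -> R) : Prop :=
  sup_tends_to_0 (fun n x => F n (x + 1) - F n x).

Definition asymp_equiv (a : nat -> nat -> list nat) (w : nat -> nat -> R)
  (X : nat -> list nat -> R) (F : nat -> R -> R) : Prop :=
  (spreads_rv a w X <-> spreads_fun F) /\
  (spreads_rv a w X -> spreads_fun F ->
   sup_tends_to_0 (fun n x => Prob (a n) (w n) (fun l => X n l <= x) - F n x)).

From Pilot Require Import Defs.
From Stdlib Require Import Reals Lra Lia List ClassicalEpsilon FunctionalExtensionality.
Open Scope R_scope.
Local Notation ind := Defs.ind.

(* Of the factors q^{λ_{n-j}}, j < -x, the first n - ℓ(λ) equal 1 and all the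
   others are at most q.  Hence φ_{n,x} = 1 as soon as x ≥ η_n, φ_{n,x} decays
   like q^(η_n - x) to the left of η_n, and crossing the unit cell containing
   η_n multiplies φ by a factor ≤ q, a jump of at least 1 - q.  Averaging,
   F_n(x+1) - F_n(x) lies between (1 - q) P(x < η_n ≤ x + 1) and
   P(x < η_n ≤ x + T) + q^T, which makes the two spreading conditions
   equivalent; and 1{η_n ≤ x} ≤ φ_{n,x} with equality at x = -n - 1 gives
   sup_x (P(η_n ≤ x) - F_n(x)) = 0. *)

Lemma series_value_eq (u : nat -> R) (s : R) : infinite_sum u s -> series_value u = s.
Proof.
  intro Hu. unfold series_value. apply (uniqueness_sum u); [|exact Hu].
  apply (epsilon_spec (inhabits 0) (fun s => infinite_sum u s)). now exists s.
Qed.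

Lemma infinite_sum_ext (u v : nat -> R) (s : R) :
  (forall k, u k = v k) -> infinite_sum u s -> infinite_sum v s.
Proof.
  intros Huv Hu. apply (Un_cv_ext (sum_f_R0 u)); [|exact Hu].
  intro n. apply sum_eq. intros; apply Huv.
Qed.

Lemma infinite_sum_plus (u v : nat -> R) (su sv : R) :
  infinite_sum u su -> infinite_sum v sv -> infinite_sum (fun k => u k + v k) (su + sv).
Proof.
  intros Hu Hv. apply (Un_cv_ext (fun n => sum_f_R0 u n + sum_f_R0 v n)).
  - intro n. now rewrite sum_plus.
  - exact (CV_plus _ _ _ _ Hu Hv).
Qed.

Lemma infinite_sum_scal (u : nat -> R) (c s : R) :
  infinite_sum u s -> infinite_sum (fun k => c * u k) (c * s).
Proof.
  intro Hu. apply (Un_cv_ext (fun n => c * sum_f_R0 u n)).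
  - intro n. rewrite scal_sum. apply sum_eq. intros; ring.
  - apply (CV_mult (fun _ => c)); [|exact Hu].
    intros eps Heps. exists 0%nat. intros. unfold Rdist. rewrite Rminus_diag, Rabs_R0. lra.
Qed.

Lemma ind_bounds (P : Prop) : 0 <= ind P <= 1.
Proof. unfold ind. destruct excluded_middle_informative; lra. Qed.

Lemma ind_true (P : Prop) : P -> ind P = 1.
Proof. unfold ind. destruct excluded_middle_informative; tauto. Qed.

Lemma ind_false (P : Prop) : ~ P -> ind P = 0.
Proof. unfold ind. destruct excluded_middle_informative; tauto. Qed.

Lemma ind_le_add (P Q S : Prop) : (P -> Q \/ S) -> ind P <= ind Q + ind S.
Proof.
  intro HP. pose proof (ind_bounds Q); pose proof (ind_bounds S).
  destruct (classic P) as [p|np]; [|rewrite ind_false by exact np; lra].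
  rewrite ind_true by exact p.
  destruct (HP p); [rewrite (ind_true Q) | rewrite (ind_true S)]; auto; lra.
Qed.

Section Expectation.
Variables (a : nat -> list nat) (w : nat -> R).
Hypotheses (w_nonneg : forall k, 0 <= w k) (w_sum : infinite_sum w 1).

Lemma Expect_spec (h : list nat -> R) (C : R) :
  (forall l, 0 <= h l <= C) -> infinite_sum (fun k => w k * h (a k)) (Expect a w h).
Proof.
  intro Hh.
  destruct (Rseries_CV_comp (fun k => w k * h (a k)) (fun k => C * w k)) as [s Hs].
  - intro k. specialize (Hh (a k)). specialize (w_nonneg k). split; nra.
  - exists (C * 1). exact (infinite_sum_scal w C 1 w_sum).
  - unfold Expect. now rewrite (series_value_eq _ s Hs).
Qed.

Lemma Expect_ext (h g : list nat -> R) :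
  (forall k, h (a k) = g (a k)) -> Expect a w h = Expect a w g.
Proof.
  intro Hhg. unfold Expect. f_equal. apply functional_extensionality.
  intro k. now rewrite Hhg.
Qed.

Lemma Expect_const (c : R) : Expect a w (fun _ => c) = c.
Proof.
  apply series_value_eq. pose proof (infinite_sum_scal w c 1 w_sum) as Hc.
  rewrite Rmult_1_r in Hc. apply (infinite_sum_ext _ _ _ (fun k => Rmult_comm c (w k)) Hc).
Qed.

Lemma Expect_le (h g : list nat -> R) (C D : R) :
  (forall l, 0 <= h l <= C) -> (forall l, 0 <= g l <= D) ->
  (forall k, h (a k) <= g (a k)) -> Expect a w h <= Expect a w g.
Proof.
  intros Hh Hg Hhg.
  refine (Rle_cv_lim _ (Expect_spec h C Hh) (Expect_spec g D Hg)).
  intro n. apply sum_Rle. intros k _. apply Rmult_le_compat_l; auto.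
Qed.

Lemma Expect_nonneg (h : list nat -> R) (C : R) :
  (forall l, 0 <= h l <= C) -> 0 <= Expect a w h.
Proof.
  intro Hh. rewrite <- (Expect_const 0).
  apply (Expect_le _ _ 0 C); [intro; lra | exact Hh | intro; apply Hh].
Qed.

Lemma Expect_add (h g : list nat -> R) (C D : R) :
  (forall l, 0 <= h l <= C) -> (forall l, 0 <= g l <= D) ->
  Expect a w (fun l => h l + g l) = Expect a w h + Expect a w g.
Proof.
  intros Hh Hg. apply series_value_eq.
  apply (infinite_sum_ext (fun k => w k * h (a k) + w k * g (a k))); [intro; ring|].
  exact (infinite_sum_plus _ _ _ _ (Expect_spec h C Hh) (Expect_spec g D Hg)).
Qed.

Lemma Expect_scal (h : list nat -> R) (c C : R) :
  (forall l, 0 <= h l <= C) -> Expect a w (fun l => c * h l) = c * Expect a w h.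
Proof.
  intro Hh. apply series_value_eq.
  apply (infinite_sum_ext (fun k => c * (w k * h (a k)))); [intro; ring|].
  exact (infinite_sum_scal _ c _ (Expect_spec h C Hh)).
Qed.

Lemma Prob_Expect (A : list nat -> Prop) :
  Prob a w A = Expect a w (fun l => ind (A l)).
Proof. reflexivity. Qed.

Lemma Prob_window_le (X : list nat -> R) (eps : R) :
  (forall x, Prob a w (fun l => x < X l <= x + 1) <= eps) ->
  forall T x, Prob a w (fun l => x < X l <= x + INR T) <= INR T * eps.
Proof.
  intros Hcell T x. induction T as [|T IH].
  - rewrite Prob_Expect, (Expect_ext _ (fun _ => 0)), Expect_const; [simpl; lra|].
    intro k. apply ind_false. simpl. lra.
  - rewrite S_INR, Rmult_plus_distr_r, Rmult_1_l, Prob_Expect.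
    specialize (Hcell (x + INR T)). rewrite Prob_Expect in IH, Hcell.
    eapply Rle_trans; [|apply (Rplus_le_compat _ _ _ _ IH Hcell)].
    rewrite <- (Expect_add _ _ 1 1) by (intro; apply ind_bounds).
    apply (Expect_le _ _ 1 2).
    + intro; apply ind_bounds.
    + intro l. pose proof (ind_bounds (x < X l <= x + INR T)).
      pose proof (ind_bounds (x + INR T < X l <= x + INR T + 1)). lra.
    + intro k. apply ind_le_add. intro. lra.
Qed.

End Expectation.

Lemma prodR_bounds (K : nat) (f : nat -> R) :
  (forall j, 0 <= f j <= 1) -> 0 <= prodR K f <= 1.
Proof.
  intro Hf. induction K as [|K IH]; cbn [prodR]; [lra|].
  specialize (Hf K). split; nra.
Qed.

Lemma prodR_antitone (K1 K2 : nat) (f : nat -> R) :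
  (forall j, 0 <= f j <= 1) -> (K1 <= K2)%nat -> prodR K2 f <= prodR K1 f.
Proof.
  intros Hf HK. induction HK as [|K2 _ IH]; cbn [prodR]; [lra|].
  pose proof (prodR_bounds K2 f Hf). specialize (Hf K2).
  enough (prodR K2 f * f K2 <= prodR K2 f) by lra.
  rewrite <- (Rmult_1_r (prodR K2 f)) at 2. apply Rmult_le_compat_l; lra.
Qed.

Lemma prodR_eq_1 (K : nat) (f : nat -> R) :
  (forall j, (j < K)%nat -> f j = 1) -> prodR K f = 1.
Proof.
  intro Hf. induction K as [|K IH]; cbn [prodR]; [reflexivity|].
  rewrite IH by (intros j Hj; apply Hf; lia). rewrite Hf by lia. ring.
Qed.

Lemma prodR_le_pow (K m : nat) (f : nat -> R) (q : R) :
  (forall j, 0 <= f j <= 1) -> (forall j, (m <= j)%nat -> f j <= q) ->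
  prodR K f <= q ^ (K - m).
Proof.
  intros Hf Hq. induction K as [|K IH]; [simpl; lra|].
  pose proof (prodR_bounds K f Hf). pose proof (Hf K).
  destruct (Nat.le_gt_cases m K) as [HmK|HKm].
  - replace (S K - m)%nat with (S (K - m)) by lia. cbn [prodR pow].
    specialize (Hq K HmK). nra.
  - replace (S K - m)%nat with 0%nat by lia.
    pose proof (prodR_bounds (S K) f Hf). simpl in *. lra.
Qed.

Lemma nfactors_le_iff (x : R) (k : nat) : (nfactors x <= k)%nat <-> - INR k <= x.
Proof.
  unfold nfactors. destruct (archimed x) as [Hup1 Hup2]. rewrite INR_IZR_INZ.
  split; intro H.
  - assert (Hz : (1 - Z.of_nat k <= up x)%Z) by lia.
    apply IZR_le in Hz. rewrite minus_IZR in Hz. simpl in Hz. lra.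
  - assert (Hz : (- Z.of_nat k < up x)%Z) by (apply lt_IZR; rewrite opp_IZR; lra).
    lia.
Qed.

Lemma nfactors_lt_iff (x : R) (k : nat) : (k < nfactors x)%nat <-> x < - INR k.
Proof.
  pose proof (nfactors_le_iff x k) as Hle. split; intro H.
  - destruct (Rlt_or_le x (- INR k)) as [Hx|Hx]; [exact Hx|]. apply Hle in Hx. lia.
  - destruct (Nat.lt_ge_cases k (nfactors x)) as [Hk|Hk]; [exact Hk|]. apply Hle in Hk. lra.
Qed.

Lemma nfactors_succ (x : R) : nfactors (x + 1) = pred (nfactors x).
Proof.
  unfold nfactors.
  replace (up (x + 1)) with (up x + 1)%Z; [lia|].
  apply tech_up; rewrite plus_IZR; destruct (archimed x); simpl; lra.
Qed.

Lemma nfactors_antitone (x y : R) : x <= y -> (nfactors y <= nfactors x)%nat.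
Proof.
  intro Hxy. apply nfactors_le_iff.
  pose proof (proj1 (nfactors_le_iff x (nfactors x)) (le_n _)). lra.
Qed.

Lemma eta_eq (n : nat) (l : list nat) : (ell l <= n)%nat -> eta n l = - INR (n - ell l).
Proof. intro Hl. unfold eta. rewrite minus_INR by exact Hl. ring. Qed.

Section Phi.
Variables (q : R) (n : nat).
Hypothesis hq : 0 <= q < 1.

Lemma pow_bounds (k : nat) : 0 <= q ^ k <= 1.
Proof. split; [apply pow_le; lra|]. rewrite <- (pow1 k). apply pow_incr. lra. Qed.

Lemma pow_antitone (m k : nat) : (m <= k)%nat -> q ^ k <= q ^ m.
Proof.
  intro Hmk. replace k with (m + (k - m))%nat by lia. rewrite pow_add.
  pose proof (pow_bounds m); pose proof (pow_bounds (k - m)). nra.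
Qed.

Lemma factor_bounds (l : list nat) (j : nat) : 0 <= factor q n l j <= 1.
Proof. unfold factor. destruct (Nat.ltb j n); [apply pow_bounds | lra]. Qed.

Lemma factor_eq_1 (l : list nat) (j : nat) : (j < n - ell l)%nat -> factor q n l j = 1.
Proof.
  intro Hj. unfold factor, ell in *. destruct (Nat.ltb_spec j n); [|lia].
  now rewrite nth_overflow by lia.
Qed.

Lemma factor_le_q (l : list nat) (j : nat) :
  is_partition l -> (n - ell l <= j)%nat -> factor q n l j <= q.
Proof.
  intros [_ Hpos] Hj. unfold factor, ell in *. destruct (Nat.ltb_spec j n); [|lra].
  specialize (Hpos (n - j - 1)%nat ltac:(lia)).
  rewrite <- pow_1. apply pow_antitone. lia.
Qed.

Lemma factor_eq_0 (l : list nat) (j : nat) : (n <= j)%nat -> factor q n l j = 0.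
Proof. intro Hj. unfold factor. now destruct (Nat.ltb_spec j n); [lia|]. Qed.

Lemma phi_bounds (x : R) (l : list nat) : 0 <= phi q n x l <= 1.
Proof. apply prodR_bounds, factor_bounds. Qed.

Lemma phi_mono (x y : R) (l : list nat) : x <= y -> phi q n x l <= phi q n y l.
Proof. intro Hxy. apply prodR_antitone; [apply factor_bounds | now apply nfactors_antitone]. Qed.

Lemma phi_increment_bounds (x : R) (l : list nat) :
  0 <= phi q n (x + 1) l - phi q n x l <= 1.
Proof.
  pose proof (phi_bounds x l); pose proof (phi_bounds (x + 1) l).
  pose proof (phi_mono x (x + 1) l ltac:(lra)). lra.
Qed.

Lemma phi_eq_1 (x : R) (l : list nat) :
  (ell l <= n)%nat -> eta n l <= x -> phi q n x l = 1.
Proof.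
  intros Hl Hx. rewrite eta_eq in Hx by exact Hl.
  apply prodR_eq_1. intros j Hj. apply factor_eq_1.
  pose proof (proj2 (nfactors_le_iff x (n - ell l)) Hx). lia.
Qed.

Lemma phi_eq_0 (x : R) (l : list nat) : x < - INR n -> phi q n x l = 0.
Proof.
  intro Hx. apply nfactors_lt_iff in Hx.
  pose proof (phi_bounds x l).
  enough (phi q n x l <= 0) by lra.
  eapply Rle_trans; [apply (prodR_antitone (S n)); [apply factor_bounds | exact Hx]|].
  cbn [prodR]. rewrite factor_eq_0 by lia. lra.
Qed.

Lemma phi_far_right (x : R) (l : list nat) (T : nat) :
  in_Omega n l -> eta n l - x > INR T -> phi q n x l <= q ^ T.
Proof.
  intros [Hpart Hl] Hx. rewrite eta_eq in Hx by exact Hl.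
  assert (HT : (n - ell l + T < nfactors x)%nat)
    by (apply nfactors_lt_iff; rewrite plus_INR; lra).
  eapply Rle_trans; [apply (prodR_le_pow _ (n - ell l)); [apply factor_bounds|]|].
  - intros j Hj. now apply factor_le_q.
  - apply pow_antitone. lia.
Qed.

Lemma phi_jump (x : R) (l : list nat) :
  in_Omega n l -> x < eta n l <= x + 1 -> phi q n (x + 1) l - phi q n x l >= 1 - q.
Proof.
  intros [Hpart Hl] Hx. rewrite eta_eq in Hx by exact Hl.
  set (m := (n - ell l)%nat) in Hx.
  assert (Hnx : nfactors x = S m).
  { pose proof (proj2 (nfactors_lt_iff x m) (proj1 Hx)).
    enough (nfactors x <= S m)%nat by lia.
    apply nfactors_le_iff. rewrite S_INR. lra. }
  unfold phi. rewrite nfactors_succ, Hnx. cbn [pred prodR].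
  rewrite prodR_eq_1 by (intros j Hj; now apply factor_eq_1).
  pose proof (factor_le_q l m Hpart (le_n _)). lra.
Qed.

Lemma phi_increment_le (x : R) (l : list nat) (T : nat) :
  in_Omega n l ->
  phi q n (x + 1) l - phi q n x l <= ind (x < eta n l <= x + INR T) + q ^ T.
Proof.
  intros [Hpart Hl]. pose proof (ind_bounds (x < eta n l <= x + INR T)).
  pose proof (pow_bounds T).
  unfold phi. rewrite nfactors_succ.
  destruct (nfactors x) as [|K] eqn:Hnx; cbn [pred prodR]; [lra|].
  pose proof (prodR_bounds K _ (factor_bounds l)). pose proof (factor_bounds l K).
  set (m := (n - ell l)%nat).
  destruct (Nat.lt_ge_cases K m) as [HKm|HmK]; [rewrite factor_eq_1 by exact HKm; lra|].
  destruct (Nat.lt_ge_cases K (m + T)) as [HKT|HKT].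
  - rewrite ind_true; [nra|].
    rewrite eta_eq by exact Hl. fold m.
    pose proof (proj1 (nfactors_lt_iff x m) ltac:(lia)).
    pose proof (proj1 (nfactors_le_iff x (m + T)) ltac:(lia)). rewrite plus_INR in *. lra.
  - assert (prodR K (factor q n l) <= q ^ T).
    { eapply Rle_trans; [apply (prodR_le_pow _ m); [apply factor_bounds|]|].
      - intros j Hj. now apply factor_le_q.
      - apply pow_antitone. lia. }
    nra.
Qed.

Lemma ind_le_phi (x : R) (l : list nat) :
  (ell l <= n)%nat -> ind (eta n l <= x) <= phi q n x l.
Proof.
  intro Hl. destruct (classic (eta n l <= x)) as [Hx|Hx].
  - rewrite ind_true, phi_eq_1 by assumption. lra.
  - rewrite ind_false by exact Hx. apply phi_bounds.
Qed.

End Phi.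

Section Distribution.
Variables (q : R) (n : nat) (a : nat -> list nat) (w : nat -> R).
Hypotheses (hq : 0 <= q < 1) (hP : discrete_prob_on n a w).

Let F (x : R) : R := Expect a w (phi q n x).

Lemma F_increment (x : R) :
  F (x + 1) - F x = Expect a w (fun l => phi q n (x + 1) l - phi q n x l).
Proof.
  destruct hP as [hw [hw1 _]]. unfold F.
  rewrite (Expect_ext a w (phi q n (x + 1))
             (fun l => phi q n x l + (phi q n (x + 1) l - phi q n x l))) by (intro; ring).
  rewrite (Expect_add a w hw hw1 _ _ 1 1); [ring | intro; now apply phi_bounds |].
  intro; now apply phi_increment_bounds.
Qed.

Lemma F_increment_nonneg (x : R) : 0 <= F (x + 1) - F x.
Proof.
  destruct hP as [hw [hw1 _]]. rewrite F_increment.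
  apply (Expect_nonneg a w hw hw1 _ 1). intro; now apply phi_increment_bounds.
Qed.

Lemma jump_Prob_le_F_increment (x : R) :
  (1 - q) * Prob a w (fun l => x < eta n l <= x + 1) <= F (x + 1) - F x.
Proof.
  destruct hP as [hw [hw1 hO]]. rewrite F_increment, Prob_Expect.
  rewrite <- (Expect_scal a w hw hw1 _ _ 1) by (intro; apply ind_bounds).
  apply (Expect_le a w hw hw1 _ _ 1 1).
  - intro l. pose proof (ind_bounds (x < eta n l <= x + 1)). split; nra.
  - intro; now apply phi_increment_bounds.
  - intro k. destruct (classic (x < eta n (a k) <= x + 1)) as [Hx|Hx].
    + rewrite ind_true by exact Hx. pose proof (phi_jump q n hq x (a k) (hO k) Hx). lra.
    + rewrite ind_false by exact Hx. pose proof (phi_increment_bounds q n hq x (a k)). lra.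
Qed.

Lemma F_increment_le_Prob_window (x : R) (T : nat) :
  F (x + 1) - F x <= Prob a w (fun l => x < eta n l <= x + INR T) + q ^ T.
Proof.
  destruct hP as [hw [hw1 hO]]. rewrite F_increment, Prob_Expect.
  rewrite <- (Expect_const a w hw1 (q ^ T)).
  rewrite <- (Expect_add a w hw hw1 _ _ 1 1);
    [| intro; apply ind_bounds | intro; now apply pow_bounds].
  apply (Expect_le a w hw hw1 _ _ 1 2).
  - intro; now apply phi_increment_bounds.
  - intro l. pose proof (ind_bounds (x < eta n l <= x + INR T)).
    pose proof (pow_bounds q hq T). lra.
  - intro k. now apply phi_increment_le.
Qed.

Lemma Prob_le_F (x : R) : Prob a w (fun l => eta n l <= x) <= F x.
Proof.
  destruct hP as [hw [hw1 hO]]. rewrite Prob_Expect.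
  apply (Expect_le a w hw hw1 _ _ 1 1); [intro; apply ind_bounds | intro; now apply phi_bounds |].
  intro k. apply ind_le_phi; [exact hq | apply (hO k)].
Qed.

Lemma Prob_eq_F_far (x : R) : x < - INR n -> Prob a w (fun l => eta n l <= x) = F x.
Proof.
  intro Hx. destruct hP as [hw [hw1 hO]]. unfold F. rewrite Prob_Expect.
  rewrite (Expect_ext a w _ (fun _ => 0)), (Expect_ext a w (phi q n x) (fun _ => 0)).
  - now rewrite !Expect_const.
  - intro k. now apply phi_eq_0.
  - intro k. apply ind_false. unfold eta. pose proof (pos_INR (ell (a k))). lra.
Qed.

End Distribution.

Lemma sup_tends_to_0_of_nonneg (f : nat -> R -> R) (N0 : nat) :
  (forall n x, (N0 <= n)%nat -> 0 <= f n x) ->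
  (forall eps, 0 < eps -> exists N, forall n x, (N <= n)%nat -> f n x <= eps) ->
  sup_tends_to_0 f.
Proof.
  intros Hpos Hub eps Heps. destruct (Hub eps Heps) as [N HN].
  exists (Nat.max N N0). intros n Hn. split.
  - intro x. apply HN. lia.
  - exists 0. pose proof (Hpos n 0 ltac:(lia)). lra.
Qed.

Lemma sup_tends_to_0_of_le_scaled (f g : nat -> R -> R) (c : R) (N0 : nat) :
  0 < c -> (forall n x, (N0 <= n)%nat -> 0 <= g n x) ->
  (forall n x, (N0 <= n)%nat -> c * g n x <= f n x) ->
  sup_tends_to_0 f -> sup_tends_to_0 g.
Proof.
  intros Hc Hg Hgf Hf. apply (sup_tends_to_0_of_nonneg _ N0 Hg).
  intros eps Heps. destruct (Hf (c * eps)) as [N HN]; [nra|].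
  exists (Nat.max N N0). intros n x Hn.
  pose proof (proj1 (HN n ltac:(lia)) x). pose proof (Hgf n x ltac:(lia)).
  apply (Rmult_le_reg_l c); lra.
Qed.

Lemma sup_tends_to_0_of_nonpos (f : nat -> R -> R) (N0 : nat) :
  (forall n x, (N0 <= n)%nat -> f n x <= 0) ->
  (forall n, (N0 <= n)%nat -> exists x, f n x = 0) ->
  sup_tends_to_0 f.
Proof.
  intros Hneg Hzero eps Heps. exists N0. intros n Hn. split.
  - intro x. pose proof (Hneg n x Hn). lra.
  - destruct (Hzero n Hn) as [x Hx]. exists x. lra.
Qed.

Section Consequence.
Variables (q : R) (a : nat -> nat -> list nat) (w : nat -> nat -> R).
Hypotheses (hq : 0 <= q < 1)
  (hP : forall n, (1 <= n)%nat -> discrete_prob_on n (a n) (w n)).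

Let F (n : nat) (x : R) : R := Expect (a n) (w n) (phi q n x).

Lemma spreads_rv_of_spreads_fun : spreads_fun F -> spreads_rv a w eta.
Proof.
  apply (sup_tends_to_0_of_le_scaled _ _ (1 - q) 1); [lra | |].
  - intros n x Hn. destruct (hP n Hn) as [hw [hw1 _]]. rewrite Prob_Expect.
    apply (Expect_nonneg _ _ hw hw1 _ 1). intro; apply ind_bounds.
  - intros n x Hn. exact (jump_Prob_le_F_increment q n (a n) (w n) hq (hP n Hn) x).
Qed.

Lemma spreads_fun_of_spreads_rv : spreads_rv a w eta -> spreads_fun F.
Proof.
  intro Hs. apply (sup_tends_to_0_of_nonneg _ 1).
  { intros n x Hn. exact (F_increment_nonneg q n (a n) (w n) hq (hP n Hn) x). }
  intros eps Heps.
  destruct (pow_lt_1_zero q) with (y := eps / 2) as [T HT]; [rewrite Rabs_pos_eq; lra | lra |].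
  specialize (HT T (le_n T)). rewrite Rabs_pos_eq in HT by (apply pow_le; lra).
  pose proof (pos_INR T).
  set (delta := eps / (2 * (INR T + 1))).
  assert (Hdelta : INR T * delta <= eps / 2).
  { unfold delta. replace (INR T * (eps / (2 * (INR T + 1))))
      with (eps / 2 - eps / (2 * (INR T + 1))) by (field; lra).
    enough (0 < eps / (2 * (INR T + 1))) by lra. apply Rdiv_lt_0_compat; lra. }
  destruct (Hs delta) as [N HN]; [apply Rdiv_lt_0_compat; lra|].
  exists (Nat.max N 1). intros n x Hn. destruct (hP n ltac:(lia)) as [hw [hw1 _]].
  pose proof (Prob_window_le _ _ hw hw1 (eta n) delta (proj1 (HN n ltac:(lia))) T x).
  pose proof (F_increment_le_Prob_window q n (a n) (w n) hq (hP n ltac:(lia)) x T).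
  unfold F. lra.
Qed.

Lemma Prob_sub_F_tends_to_0 :
  sup_tends_to_0 (fun n x => Prob (a n) (w n) (fun l => eta n l <= x) - F n x).
Proof.
  apply (sup_tends_to_0_of_nonpos _ 1).
  - intros n x Hn. pose proof (Prob_le_F q n (a n) (w n) hq (hP n Hn) x). unfold F. lra.
  - intros n Hn. exists (- INR n - 1).
    rewrite (Prob_eq_F_far q n (a n) (w n) hq (hP n Hn)) by lra. unfold F. ring.
Qed.

Lemma asymp_equiv_eta_phi : asymp_equiv a w eta F.
Proof.
  split; [split|].
  - exact spreads_fun_of_spreads_rv.
  - exact spreads_rv_of_spreads_fun.
  - intros _ _. exact Prob_sub_F_tends_to_0.
Qed.

End Consequence.

Theorem proposition5p8 (q : R) (hq0 : 0 <= q) (hq1 : q < 1)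
  (a : nat -> nat -> list nat) (w : nat -> nat -> R)
  (hP : forall n : nat, (1 <= n)%nat -> discrete_prob_on n (a n) (w n)) :
  (forall n : nat, (1 <= n)%nat -> forall l, in_Omega n l -> forall x y : R, x <= y ->
     0 <= phi q n x l /\ phi q n x l <= phi q n y l /\ phi q n y l <= 1) /\
  (forall eps, 0 < eps -> exists M : R, forall n : nat, (1 <= n)%nat ->
     forall x l, in_Omega n l -> eta n l - x > M -> phi q n x l < eps) /\
  (forall eps, 0 < eps -> exists M : R, forall n : nat, (1 <= n)%nat ->
     forall x l, in_Omega n l -> eta n l - x < - M -> phi q n x l > 1 - eps) /\
  (exists c : R, 0 < c /\ forall n : nat, (1 <= n)%nat ->
     forall x l, in_Omega n l -> x < eta n l <= x + 1 ->
       phi q n (x + 1) l - phi q n x l >= c) /\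
  asymp_equiv a w eta (fun n x => Expect (a n) (w n) (phi q n x)).
Proof.
  assert (hq : 0 <= q < 1) by lra.
  split; [|split; [|split; [|split]]].
  - intros n _ l _ x y Hxy. pose proof (phi_bounds q n hq x l).
    pose proof (phi_bounds q n hq y l). pose proof (phi_mono q n hq x y l Hxy). lra.
  - intros eps Heps.
    destruct (pow_lt_1_zero q) with (y := eps) as [T HT]; [rewrite Rabs_pos_eq; lra | lra |].
    specialize (HT T (le_n T)). rewrite Rabs_pos_eq in HT by (apply pow_le; lra).
    exists (INR T). intros n _ x l Hl Hx.
    pose proof (phi_far_right q n hq x l T Hl Hx). lra.
  - intros eps Heps. exists 0. intros n _ x l [_ Hl] Hx.
    rewrite phi_eq_1 by (exact Hl || lra). lra.
  - exists (1 - q). split; [lra|]. intros n _ x l Hl Hx. exact (phi_jump q n hq x l Hl Hx).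
  - exact (asymp_equiv_eta_phi q a w hq hP).
Qed.
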